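(* For all $A,B\in\mathrm{SL}(2,\mathbb Z)$, $c(AB)\le c(A)+c(B)$ and $c(AB)\equiv c(A)+c(B)\pmod 2$.
   Context: Admissible hexagons are the sets $\{\pm a,\pm b,\pm(a+b)\}\subset\mathbb Z^2$ with $(a,b)$ a basis of $\mathbb Z^2$ (they correspond to isotopy classes of $\theta$-curves in $T^2$). $\Gamma$ is the graph whose vertices are admissible hexagons, two being adjacent iff they share two opposite pairs of vertices $\pm\sigma,\pm\mu$ (this corresponds to a flip of a $\theta$-curve); $\Gamma$ is a trivalent tree, $d$ its graph distance, and $\mathrm{SL}(2,\mathbb Z)$ acts on it by isometries. With $W_0=\{\pm(1,0),\pm(0,1),\pm(1,-1)\}$, $c(A)=d(W_0,AW_0)$. *)

From HB Require Import structures.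
From mathcomp Require Import all_boot all_order all_algebra.
From mathcomp Require Import finmap.
From Stdlib Require Import ClassicalEpsilon.
Set Implicit Arguments. Unset Strict Implicit. Unset Printing Implicit Defensive.
Import Order.TTheory GRing.Theory Num.Theory.
Local Open Scope ring_scope.


Notation vec := ('cV[int]_2).

Definition vec2 (x y : int) : vec := \col_(i < 2) (if i == ord0 then x else y).

Definition cols2 (a b : vec) : 'M[int]_2 :=
  \matrix_(i < 2, j < 2) (if j == ord0 then a i ord0 else b i ord0).
Definition is_basis (a b : vec) : bool :=
  (\det (cols2 a b) == 1) || (\det (cols2 a b) == -1).

(* Vertices of Gamma: finite sets of vectors (hexagons). *)
Definition hexagon := {fset vec}.

Definition hex_list (a b : vec) : seq vec := [:: a; - a; b; - b; a + b; - (a + b)].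
Definition hex_of (a b : vec) : hexagon := [fset x | x in hex_list a b]%fset.

Definition admissible (H : hexagon) : Prop :=
  exists a b : vec, is_basis a b /\ H = hex_of a b.

Definition adjacent (H1 H2 : hexagon) : Prop :=
  [/\ admissible H1, admissible H2, H1 <> H2 &
   exists sigma mu : vec,
     [/\ sigma <> mu, sigma <> - mu,
         [/\ sigma \in H1, - sigma \in H1, mu \in H1 & - mu \in H1] &
         [/\ sigma \in H2, - sigma \in H2, mu \in H2 & - mu \in H2]]].

Inductive walk : nat -> hexagon -> hexagon -> Prop :=
| walk0 H : walk 0 H H
| walkS n H1 H2 H3 : adjacent H1 H2 -> walk n H2 H3 -> walk n.+1 H1 H3.

Definition is_dist (H1 H2 : hexagon) (n : nat) : Prop :=
  walk n H1 H2 /\ forall m, walk m H1 H2 -> (n <= m)%N.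

(* graph distance (Gamma is connected, so this is the genuine distance) *)
Definition dist (H1 H2 : hexagon) : nat :=
  epsilon (inhabits 0%N) (is_dist H1 H2).

Definition W0_list : seq vec :=
  [:: vec2 1 0; - vec2 1 0; vec2 0 1; - vec2 0 1; vec2 1 (-1); - vec2 1 (-1)].
Definition W0 : hexagon := [fset x | x in W0_list]%fset.

Definition act (A : 'M[int]_2) (H : hexagon) : hexagon :=
  [fset A *m v | v in H]%fset.

Definition c (A : 'M[int]_2) : nat := dist W0 (act A W0).

From mathcomp Require Import all_boot all_order all_algebra.
From mathcomp Require Import finmap zify ring.
From Stdlib Require Import ClassicalEpsilon.
Set Implicit Arguments. Unset Strict Implicit. Unset Printing Implicit Defensive.
Import Order.TTheory GRing.Theory Num.Theory.
Local Open Scope ring_scope.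

(* SL(2,Z) acts on Gamma by graph automorphisms, so a walk from W0 to A W0
   followed by the A-image of a walk from W0 to B W0 is a walk of length
   c(A) + c(B) from W0 to AB W0.  Such walks exist because Gamma is connected:
   right multiplication by a shear [[1,+-1],[0,1]] or [[1,0],[+-1,1]] moves
   A W0 to a neighbour, and Euclid's algorithm on the first row of A reduces A
   to +-1, which fixes every hexagon.

   For the parity, Gamma is bipartite: the weight sum_(v in H) v_1 v_2 of a
   hexagon changes by 4 mod 8 along every edge.  Indeed a flip keeps +-s and
   +-m and trades +-(s + m) for +-(s - m), which changes the weight by
   2 ((s - m)_1 (s - m)_2 - (s + m)_1 (s + m)_2) = -4 (s_1 m_2 + s_2 m_1),
   and s_1 m_2 + s_2 m_1 is odd because it is congruent to det(s, m) = +-1. *)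

Definition i1 : 'I_2 := @Ordinal 2 1 isT.

Lemma ord2P (i : 'I_2) : i = ord0 \/ i = i1.
Proof. by case: i => [[|[|k]] Hi]; [left | right | by []]; apply: val_inj. Qed.

Lemma lift0_ord1 : lift ord0 (ord0 : 'I_1) = i1.
Proof. exact: val_inj. Qed.

Lemma vec2_eta (v : vec) : v = vec2 (v 0 0) (v i1 0).
Proof. by apply/matrixP => i j; rewrite (ord1 j) mxE; case: (ord2P i) => ->. Qed.

Lemma vec2_eqE x y x' y' : (vec2 x y == vec2 x' y') = (x == x') && (y == y').
Proof.
apply/eqP/andP => [e|[/eqP -> /eqP ->]//].
by have := congr1 (fun v : vec => (v 0 0, v i1 0)) e; rewrite !mxE => -[-> ->].
Qed.

Lemma vec2N x y : - vec2 x y = vec2 (- x) (- y).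
Proof. by apply/matrixP => i j; rewrite !mxE; case: ifP. Qed.

Lemma vec2D x y x' y' : vec2 x y + vec2 x' y' = vec2 (x + x') (y + y').
Proof. by apply/matrixP => i j; rewrite !mxE; case: ifP. Qed.

Lemma mulmx_vec_entry (A : 'M[int]_2) (v : vec) i :
  (A *m v) i 0 = A i 0 * v 0 0 + A i i1 * v i1 0.
Proof. by rewrite mxE !big_ord_recl big_ord0 addr0 lift0_ord1. Qed.

Lemma det_mx2 (A : 'M[int]_2) : \det A = A 0 0 * A i1 i1 - A 0 i1 * A i1 0.
Proof.
rewrite (expand_det_row _ ord0) !big_ord_recl big_ord0 /cofactor !det_mx11 !mxE.
rewrite lift0_ord1 /= expr0 expr1 (_ : lift i1 ord0 = 0); last exact: val_inj.
ring.
Qed.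

Definition cross (u v : vec) : int := u 0 0 * v i1 0 - u i1 0 * v 0 0.

Lemma crossDl u w v : cross (u + w) v = cross u v + cross w v.
Proof. rewrite /cross !mxE; ring. Qed.
Lemma crossDr u v w : cross u (v + w) = cross u v + cross u w.
Proof. rewrite /cross !mxE; ring. Qed.
Lemma crossNl u v : cross (- u) v = - cross u v.
Proof. rewrite /cross !mxE; ring. Qed.
Lemma crossNr u v : cross u (- v) = - cross u v.
Proof. rewrite /cross !mxE; ring. Qed.
Lemma crossxx u : cross u u = 0.
Proof. rewrite /cross; ring. Qed.

Lemma cross_mulmx (A : 'M[int]_2) u v : cross (A *m u) (A *m v) = \det A * cross u v.
Proof. rewrite /cross det_mx2 !mulmx_vec_entry; ring. Qed.

Lemma det_cols2 a b : \det (cols2 a b) = cross a b.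
Proof. rewrite det_mx2 /cols2 !mxE /= /cross; ring. Qed.

Lemma is_basisE a b : is_basis a b = (cross a b == 1) || (cross a b == -1).
Proof. by rewrite /is_basis det_cols2. Qed.

Lemma mem_hexE v a b : (v \in hex_of a b) = (v \in hex_list a b).
Proof. by rewrite in_fset. Qed.

Lemma mem_hexP v a b : v \in hex_of a b <->
  v = a \/ v = - a \/ v = b \/ v = - b \/ v = a + b \/ v = - (a + b).
Proof.
rewrite mem_hexE !inE; split.
  by move=> H; repeat (case/orP: H => [/eqP->|H]; first tauto); move/eqP: H => ->; tauto.
by case=> [->|[->|[->|[->|[->|->]]]]]; rewrite eqxx ?orbT.
Qed.

Lemma hex_of_oppr v a b : v \in hex_of a b -> - v \in hex_of a b.
Proof. by rewrite !mem_hexP => -[|[|[|[|[|]]]]] ->; rewrite ?opprK; tauto. Qed.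

Lemma hex_of_sub a b x y :
  x \in hex_of a b -> y \in hex_of a b -> x + y \in hex_of a b ->
  {subset hex_of x y <= hex_of a b}.
Proof. by move=> hx hy hxy v /mem_hexP [|[|[|[|[|]]]]] ->; rewrite ?hex_of_oppr. Qed.

Lemma hex_of_eq a b x y :
  a \in hex_of x y -> b \in hex_of x y -> a + b \in hex_of x y ->
  x \in hex_of a b -> y \in hex_of a b -> x + y \in hex_of a b ->
  hex_of a b = hex_of x y.
Proof.
move=> ha hb hab hx hy hxy.
by apply/fsetP => v; apply/idP/idP; apply: hex_of_sub.
Qed.

Lemma hex_of_NN a b : hex_of (- a) (- b) = hex_of a b.
Proof. by apply: hex_of_eq; apply/mem_hexP; rewrite -?opprD ?opprK; tauto. Qed.

Lemma uniq_hex_list a b : cross a b != 0 -> uniq (hex_list a b).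
Proof.
move=> nz; apply: (@map_uniq _ _ (fun v => (cross v b, cross a v))).
rewrite /= !(crossDl, crossDr, crossNl, crossNr, crossxx) !oppr0 !addr0 !add0r.
by move: nz; set e := cross a b => nz; rewrite !inE !xpair_eqE; lia.
Qed.

Lemma perm_hex_of a b : cross a b != 0 -> perm_eq (hex_of a b) (hex_list a b).
Proof.
move=> nz; apply: perm_trans (enum_imfset _ _) _ => //.
by rewrite map_id -[enum_finmem _]/(undup _) undup_id ?uniq_hex_list.
Qed.

Lemma card_hex_of a b : cross a b != 0 -> #|` hex_of a b| = 6%N.
Proof. by move=> nz; rewrite (perm_size (perm_hex_of nz)). Qed.

Lemma hex_of_eq_card a b x y : cross a b != 0 -> cross x y != 0 ->
  x \in hex_of a b -> y \in hex_of a b -> x + y \in hex_of a b ->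
  hex_of x y = hex_of a b.
Proof.
move=> nz_ab nz_xy hx hy hxy; apply/eqP.
by rewrite eqEfcard !card_hex_of // leqnn andbT; apply/fsubsetP; apply: hex_of_sub.
Qed.

Lemma mem_act A H w : w \in H -> A *m w \in act A H.
Proof. by move=> hw; apply/imfsetP; exists w. Qed.

Lemma act_hex A a b : act A (hex_of a b) = hex_of (A *m a) (A *m b).
Proof.
apply/fsetP => v; apply/imfsetP/idP => [[w /mem_hexP hw ->]|/mem_hexP hv].
  by apply/mem_hexP; case: hw => [|[|[|[|[|]]]]] ->; rewrite ?mulmxN ?mulmxDr; tauto.
by rewrite -!mulmxN -mulmxDr -mulmxN in hv;
  case: hv => [|[|[|[|[|]]]]] ->; (eexists; last reflexivity); apply/mem_hexP; tauto.
Qed.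

Lemma act_mul A B H : act (A *m B) H = act A (act B H).
Proof.
apply/fsetP => v; apply/imfsetP/imfsetP => [[w hw ->]|[w /imfsetP[u hu ->] ->]].
  by exists (B *m w); [exact: mem_act | rewrite mulmxA].
by exists u; rewrite ?mulmxA.
Qed.

Lemma act1 H : act 1%:M H = H.
Proof.
apply/fsetP => v; apply/imfsetP/idP => [[w hw ->]|hv]; first by rewrite mul1mx.
by exists v; rewrite ?mul1mx.
Qed.

Lemma act_oppmx A a b : act (- A) (hex_of a b) = act A (hex_of a b).
Proof. by rewrite !act_hex !mulNmx hex_of_NN. Qed.

Section UnimodularAction.

Variable A : 'M[int]_2.
Hypothesis detA : \det A = 1.

Lemma mulmx_det1_inj : injective (fun v : vec => A *m v).
Proof.
by move=> u v /(congr1 (mulmx (\adj A))); rewrite !mulmxA mul_adj_mx detA !mul1mx.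
Qed.

Lemma act_inj : injective (act A).
Proof.
by move=> H1 H2 e; rewrite -[H1]act1 -[H2]act1 -detA -mul_adj_mx !act_mul e.
Qed.

Lemma admissible_act H : admissible H -> admissible (act A H).
Proof.
move=> [a [b [hb ->]]]; exists (A *m a), (A *m b); split; last exact: act_hex.
by rewrite is_basisE cross_mulmx detA mul1r -is_basisE.
Qed.

Lemma adjacent_act H1 H2 : adjacent H1 H2 -> adjacent (act A H1) (act A H2).
Proof.
have minj := mulmx_det1_inj.
move=> [a1 a2 ne [s [m [nsm nsNm [h1 h2 h3 h4] [h5 h6 h7 h8]]]]].
split; [exact: admissible_act | exact: admissible_act | by move/act_inj |].
exists (A *m s), (A *m m); split.
- by move/minj.
- by rewrite -mulmxN => /minj.
- by split; rewrite -?mulmxN; apply: mem_act.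
- by split; rewrite -?mulmxN; apply: mem_act.
Qed.

Lemma walk_act n H1 H2 : walk n H1 H2 -> walk n (act A H1) (act A H2).
Proof.
elim => [H|k K1 K2 K3 adj _ IH]; first exact: walk0.
exact: walkS (adjacent_act adj) IH.
Qed.

End UnimodularAction.

Lemma walk_cat n m H1 H2 H3 : walk n H1 H2 -> walk m H2 H3 -> walk (n + m) H1 H3.
Proof.
elim => [//|k K1 K2 K3 adj _ IH] w2.
by rewrite addSn; apply: walkS adj (IH w2).
Qed.

Lemma cols2_vec2 a b x y : cols2 a b *m vec2 x y = x *: a + y *: b.
Proof.
apply/matrixP => i j; rewrite (ord1 j) mulmx_vec_entry !mxE /=.
by rewrite mulrC [y * _]mulrC.
Qed.

Notation std_hex := (hex_of (vec2 1 0) (vec2 0 1)).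

Lemma hex_of_cols2 a b : hex_of a b = act (cols2 a b) std_hex.
Proof. by rewrite act_hex !cols2_vec2 !scale1r !scale0r addr0 add0r. Qed.

Lemma mem_std_hex v : (v \in std_hex) =
  (v \in [:: vec2 1 0; vec2 (-1) 0; vec2 0 1; vec2 0 (-1); vec2 1 1; vec2 (-1) (-1)]).
Proof. by rewrite mem_hexE /hex_list !(vec2N, vec2D) oppr0 addr0 add0r. Qed.

Ltac std_hex_lia :=
  unfold cross; rewrite ?mem_std_hex ?(vec2N, vec2D) ?in_cons ?in_nil ?vec2_eqE ?mxE /=; lia.

Lemma std_hex_pair s m :
  s \in std_hex -> m \in std_hex -> s <> m -> s <> - m ->
  (std_hex = hex_of s m \/ std_hex = hex_of s (- m)) /\
  (cross s m = 1 \/ cross s m = -1).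
Proof.
rewrite !mem_std_hex !inE.
move=> /or4P[/eqP->|/eqP->|/eqP->|/orP[/eqP->|/orP[/eqP->|/eqP->]]];
move=> /or4P[/eqP->|/eqP->|/eqP->|/orP[/eqP->|/orP[/eqP->|/eqP->]]] ns nNs;
  rewrite ?vec2N ?opprK ?oppr0 in nNs;
  try (exfalso; first [exact: ns erefl | exact: nNs erefl]);
  (split; last by std_hex_lia);
  first [left; symmetry; apply: hex_of_eq_card; std_hex_lia
        | right; symmetry; apply: hex_of_eq_card; std_hex_lia].
Qed.

Lemma hex_of_pair a b s m :
  is_basis a b -> s \in hex_of a b -> m \in hex_of a b -> s <> m -> s <> - m ->
  (hex_of a b = hex_of s m \/ hex_of a b = hex_of s (- m)) /\
  (cross s m = 1 \/ cross s m = -1).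
Proof.
rewrite is_basisE (hex_of_cols2 a b) => hab.
move=> /imfsetP[s' hs' ->] /imfsetP[m' hm' ->] ns nNs.
have ns' : s' <> m' by move=> e; apply: ns; rewrite e.
have nNs' : s' <> - m' by move=> e; apply: nNs; rewrite e mulmxN.
have [hex hc] := std_hex_pair hs' hm' ns' nNs'.
rewrite cross_mulmx det_cols2 -mulmxN -!act_hex.
by split; [case: hex => ->; tauto | case/orP: hab => /eqP->; lia].
Qed.

Definition weight (H : hexagon) : int := \sum_(v <- H) v 0 0 * v i1 0.

Lemma weight_hex_of a b : cross a b != 0 ->
  weight (hex_of a b) = \sum_(v <- hex_list a b) v 0 0 * v i1 0.
Proof. by move=> nz; rewrite /weight (perm_big _ (perm_hex_of nz)). Qed.

Lemma weight_flip s m : cross s m = 1 \/ cross s m = -1 ->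
  (weight (hex_of s (- m)) = weight (hex_of s m) + 4 %[mod 8])%Z.
Proof.
move=> hc; rewrite !weight_hex_of ?crossNr; [|lia|lia].
rewrite !big_cons big_nil !mxE; move: hc; rewrite /cross.
by move: (s 0 0) (s i1 0) (m 0 0) (m i1 0) => x y u v; lia.
Qed.

Lemma adjacent_weight H1 H2 : adjacent H1 H2 -> (weight H2 = weight H1 + 4 %[mod 8])%Z.
Proof.
move=> [[a [b [hb ->]]] [a' [b' [hb' ->]]] ne [s [m [nsm nsNm [h1 _ h3 _] [h5 _ h7 _]]]]].
have [[e1|e1] hc] := hex_of_pair hb h1 h3 nsm nsNm;
have [[e2|e2] _] := hex_of_pair hb' h5 h7 nsm nsNm;
  rewrite e1 e2 in ne *; [by case: ne | exact: weight_flip | | by case: ne].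
have := weight_flip hc; move: (weight _) (weight _) => x y; clear; lia.
Qed.

Lemma walk_weight n H1 H2 : walk n H1 H2 -> (weight H2 = weight H1 + 4 * n %[mod 8])%Z.
Proof.
elim => [H|k K1 K2 K3 adj _ IH]; first lia.
by have := adjacent_weight adj; lia.
Qed.

Lemma walk_length_mod2 n m H1 H2 : walk n H1 H2 -> walk m H1 H2 -> n = m %[mod 2].
Proof. by move=> /walk_weight wn /walk_weight wm; lia. Qed.

Lemma ex_minimal (P : nat -> Prop) :
  (exists n, P n) -> exists n, P n /\ forall m, P m -> (n <= m)%N.
Proof.
move=> [n Pn]; elim/ltn_ind: n Pn => n IH Pn.
have [[m ltmn Pm]|nosmaller] := classic (exists2 m, (m < n)%N & P m).
  exact: IH ltmn Pm.
by exists n; split => // m Pm; rewrite leqNgt; apply/negP => ltmn; apply: nosmaller; exists m.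
Qed.

Lemma dist_spec H1 H2 : (exists n, walk n H1 H2) -> is_dist H1 H2 (dist H1 H2).
Proof. by move/ex_minimal; apply: epsilon_spec. Qed.

Definition M22 (p q r s : int) : 'M[int]_2 :=
  \matrix_(i < 2, j < 2)
    if i == ord0 then (if j == ord0 then p else q) else (if j == ord0 then r else s).

Lemma M22_eta (A : 'M[int]_2) : A = M22 (A 0 0) (A 0 i1) (A i1 0) (A i1 i1).
Proof.
by apply/matrixP => i j; rewrite !mxE; case: (ord2P i) => ->; case: (ord2P j) => ->.
Qed.

Lemma M22_vec2 p q r s x y :
  M22 p q r s *m vec2 x y = vec2 (p * x + q * y) (r * x + s * y).
Proof. by rewrite [LHS]vec2_eta !mulmx_vec_entry !mxE. Qed.

Lemma M22_det p q r s : \det (M22 p q r s) = p * s - q * r.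
Proof. by rewrite det_mx2 !mxE. Qed.

Lemma M22_mul p q r s p' q' r' s' :
  M22 p q r s *m M22 p' q' r' s' =
  M22 (p * p' + q * r') (p * q' + q * s') (r * p' + s * r') (r * q' + s * s').
Proof.
apply/matrixP => i j; rewrite mxE !big_ord_recl big_ord0 lift0_ord1 !mxE addr0.
by case: (ord2P i) => ->; case: (ord2P j) => ->.
Qed.

Lemma M22N p q r s : - M22 p q r s = M22 (- p) (- q) (- r) (- s).
Proof. by apply/matrixP => i j; rewrite !mxE; do 2 case: ifP. Qed.

Lemma M22_1 : M22 1 0 0 1 = 1%:M.
Proof.
by apply/matrixP => i j; rewrite !mxE; case: (ord2P i) => ->; case: (ord2P j) => ->.
Qed.

Lemma W0E : W0 = hex_of (vec2 1 (-1)) (vec2 0 1).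
Proof.
apply/fsetP => v; rewrite /W0 in_fset mem_hexE /W0_list /hex_list [v]vec2_eta.
by rewrite !inE !(vec2N, vec2D) !vec2_eqE; lia.
Qed.

Lemma adjacent_hex_of a b a' b' s m w :
  is_basis a b -> is_basis a' b' -> w \in hex_of a' b' -> w \notin hex_of a b ->
  s != m -> s != - m ->
  [&& s \in hex_of a b, - s \in hex_of a b, m \in hex_of a b & - m \in hex_of a b] ->
  [&& s \in hex_of a' b', - s \in hex_of a' b', m \in hex_of a' b' & - m \in hex_of a' b'] ->
  adjacent (hex_of a b) (hex_of a' b').
Proof.
move=> hb hb' hw hw' /eqP nsm /eqP nsNm /and4P[h1 h2 h3 h4] /and4P[h5 h6 h7 h8].
split; [by exists a, b | by exists a', b' | by move=> e; move: hw'; rewrite e hw |].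
by exists s, m.
Qed.

Definition shear12 (k : int) := M22 1 k 0 1.
Definition shear21 (k : int) := M22 1 0 k 1.

Ltac adjacent_W0_by s m w :=
  rewrite W0E act_hex !M22_vec2;
  apply: (@adjacent_hex_of _ _ _ _ s m w);
  rewrite ?is_basisE /cross ?mem_hexE /hex_list ?inE ?(vec2N, vec2D) ?vec2_eqE ?mxE /=; lia.

Lemma adjacent_W0_shear12 k : k = 1 \/ k = -1 -> adjacent W0 (act (shear12 k) W0).
Proof.
case=> ->; [adjacent_W0_by (vec2 1 0) (vec2 0 1) (vec2 1 1)
           |adjacent_W0_by (vec2 1 0) (vec2 1 (-1)) (vec2 2 (-1))].
Qed.

Lemma adjacent_W0_shear21 k : k = 1 \/ k = -1 -> adjacent W0 (act (shear21 k) W0).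
Proof.
case=> ->; [adjacent_W0_by (vec2 1 0) (vec2 0 1) (vec2 1 1)
           |adjacent_W0_by (vec2 0 1) (vec2 1 (-1)) (vec2 1 (-2))].
Qed.

Definition reachable (A : 'M[int]_2) : Prop := exists n, walk n W0 (act A W0).

Lemma reachable_mulmx A g :
  \det A = 1 -> adjacent W0 (act g W0) -> reachable A -> reachable (A *m g).
Proof.
move=> detA adj [n w]; exists (n + 1)%N; rewrite act_mul.
exact: walk_cat w (walkS (adjacent_act detA adj) (walk0 _)).
Qed.

Lemma reachable_shear12 k p q r s : k = 1 \/ k = -1 -> p * s - q * r = 1 ->
  reachable (M22 p (q - k * p) r (s - k * r)) -> reachable (M22 p q r s).
Proof.
move=> hk det1 hr.
have -> : M22 p q r s = M22 p (q - k * p) r (s - k * r) *m shear12 k.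
  by rewrite /shear12 M22_mul; congr M22; ring.
apply: reachable_mulmx hr; last exact: adjacent_W0_shear12.
by rewrite M22_det -det1; ring.
Qed.

Lemma reachable_shear21 k p q r s : k = 1 \/ k = -1 -> p * s - q * r = 1 ->
  reachable (M22 (p - k * q) q (r - k * s) s) -> reachable (M22 p q r s).
Proof.
move=> hk det1 hr.
have -> : M22 p q r s = M22 (p - k * q) q (r - k * s) s *m shear21 k.
  by rewrite /shear21 M22_mul; congr M22; ring.
apply: reachable_mulmx hr; last exact: adjacent_W0_shear21.
by rewrite M22_det -det1; ring.
Qed.

Lemma reachable_oppmx A : reachable A -> reachable (- A).
Proof. by rewrite /reachable W0E act_oppmx. Qed.

Lemma reachable_unipotent r : reachable (M22 1 0 r 1).
Proof.
have [n] := ubnP (absz r); elim: n r => // n IH r lt_rn.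
have [->|r_nz] := eqVneq r 0; first by exists 0%N; rewrite M22_1 act1; apply: walk0.
have [k hk lt_rk] : exists2 k : int, k = 1 \/ k = -1 & (absz (r - k) < n)%N.
  by case: (ltrP 0 r) => hr; [exists 1 | exists (-1)]; lia.
apply: (reachable_shear21 hk); first by rewrite mul0r subr0 mulr1.
by rewrite mulr0 subr0 mulr1; apply: IH.
Qed.

Lemma mulz_eq1 (p s : int) : p * s = 1 -> p = 1 \/ p = -1.
Proof.
move=> ps1; have : p \is a GRing.unit by apply/unitrPr; exists s.
by rewrite qualifE /= => /orP[] /eqP; [left | right].
Qed.

Lemma reachable_lower p q r s : q = 0 -> p * s - q * r = 1 -> reachable (M22 p q r s).
Proof.
move=> ->; rewrite mul0r subr0 => ps1.
have [p1|pN1] := mulz_eq1 ps1.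
  by move: ps1; rewrite p1 mul1r => ->; apply: reachable_unipotent.
move: ps1; rewrite pN1 mulN1r => /eqP; rewrite eqr_oppLR => /eqP ->.
by rewrite -[r]opprK -oppr0 -M22N; apply/reachable_oppmx/reachable_unipotent.
Qed.

Lemma reachable_SL2 p q r s : p * s - q * r = 1 -> reachable (M22 p q r s).
Proof.
have [n] := ubnP (absz p + absz q); elim: n p q r s => // n IH p q r s lt_pqn det1.
have [q0|q_nz] := eqVneq q 0; first exact: reachable_lower.
have [p0|p_nz] := eqVneq p 0.
  apply: (@reachable_shear21 (-1)); [by right | done |].
  apply: (@reachable_shear12 1); [by left | lia |].
  by apply: reachable_lower; lia.
case: (ltrP 0 p) => hp; case: (ltrP 0 q) => hq; case: (leqP (absz q) (absz p)) => hpq;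
  first [ by apply: (@reachable_shear21 1); [left | | apply: IH]; lia
        | by apply: (@reachable_shear21 (-1)); [right | | apply: IH]; lia
        | by apply: (@reachable_shear12 1); [left | | apply: IH]; lia
        | by apply: (@reachable_shear12 (-1)); [right | | apply: IH]; lia ].
Qed.

Lemma reachable_det1 A : \det A = 1 -> reachable A.
Proof. by rewrite [A]M22_eta M22_det; apply: reachable_SL2. Qed.

Theorem lemma1 (A B : 'M[int]_2) :
  \det A = 1 -> \det B = 1 ->
  (c (A *m B) <= c A + c B)%N /\ c (A *m B) = (c A + c B)%N %[mod 2].
Proof.
move=> detA detB.
have detAB : \det (A *m B) = 1 by rewrite det_mulmx detA detB mulr1.
have [wA _] := dist_spec (reachable_det1 detA).
have [wB _] := dist_spec (reachable_det1 detB).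
have [wAB minAB] := dist_spec (reachable_det1 detAB).
have w : walk (c A + c B) W0 (act (A *m B) W0).
  by rewrite act_mul; apply: walk_cat wA (walk_act detA wB).
by split; [exact: minAB | exact: walk_length_mod2 wAB w].
Qed.
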